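(* Let $m\in\mathbb N$ and $k_1\ge k_2\ge\dots\ge k_m\ge1$ be integers. Then $$\sum_{j_2=0}^{k_2}\cdots\sum_{j_m=0}^{k_m}A_{j_2:j_m}=\operatorname{card}\Pi_{k_1,\dots,k_m},$$ where $A_{j_2:j_m}=\prod_{l=2}^m\binom{k_l}{j_l}\cdot\frac{k_1!\,(k_1+j_2)!\cdots(k_1+\sum_{i=2}^{m-1}j_i)!}{(k_1+j_2-k_2)!\,(k_1+j_2+j_3-k_3)!\cdots(k_1+\sum_{i=2}^mj_i-k_m)!}$ (for $m=1$ the left side is interpreted as $1$).
   Context: For $k=k_1+\dots+k_m$, let $[k]=\{1,\dots,k\}$ and $\pi=\{J_1,\dots,J_m\}$ with $J_i=\{j:k_1+\dots+k_{i-1}<j\le k_1+\dots+k_i\}$. $\Pi_{k_1,\dots,k_m}$ denotes the set of all partitions $\sigma$ of $[k]$ into disjoint nonempty blocks such that every block of $\sigma$ meets each $J_i$ in at most one element. *)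

From HB Require Import structures.
From mathcomp Require Import all_boot all_order all_algebra.
Set Implicit Arguments. Unset Strict Implicit. Unset Printing Implicit Defensive.
Import Order.TTheory GRing.Theory Num.Theory.

(* m = n.+1 groups of sizes k : 'I_n.+1 -> nat; k ord0 = k_1.
   The ground set [k] = {1,...,K} is modelled by 'I_K = {0,...,K-1},
   K = \sum_i k i. *)
Definition ktot (n : nat) (k : 'I_n.+1 -> nat) : nat := \sum_(i < n.+1) k i.

Definition Jblock (n : nat) (k : 'I_n.+1 -> nat) (i : 'I_n.+1)
  : {set 'I_(ktot k)} :=
  [set x : 'I_(ktot k) | (\sum_(i' < n.+1 | (i' < i)%N) k i' <= x)%N
                          && (x < \sum_(i' < n.+1 | (i' <= i)%N) k i')%N].

Definition Pi_set (n : nat) (k : 'I_n.+1 -> nat) : {set {set {set 'I_(ktot k)}}} :=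
  [set P : {set {set 'I_(ktot k)}} |
     partition P [set: 'I_(ktot k)]
     && [forall B in P, forall i : 'I_n.+1, (#|B :&: Jblock k i| <= 1)%N]].

(* A_{j_2:j_m}; index i : 'I_n corresponds to l = i + 2, i.e. k_l = k (lift ord0 i),
   j_l = j i. *)
Definition Aterm (n : nat) (k : 'I_n.+1 -> nat) (j : 'I_n -> nat) : rat :=
  \prod_(i < n)
    ((('C(k (lift ord0 i), j i))%:R : rat)
     * ((k ord0 + \sum_(i' < n | (i' < i)%N) j i')`!)%:R
     / ((k ord0 + \sum_(i' < n | (i' <= i)%N) j i' - k (lift ord0 i))`!)%:R).

From HB Require Import structures.
From mathcomp Require Import all_boot all_order all_algebra.
From mathcomp Require Import zify.
Import Order.TTheory GRing.Theory Num.Theory.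

Set Implicit Arguments. Unset Strict Implicit. Unset Printing Implicit Defensive.

(* Call a set of points sparse when it meets every group J_i
   in at most one point, so that Pi_{k_1,...,k_m} is the set of partitions of
   [k] into sparse blocks.
   (1) Adding a point x of group J_i to a set A: every sparse partition of
       x |: A comes from a unique sparse partition Q of A, either by adding
       the block {x} or by inserting x into one of the blocks of Q avoiding
       J_i, of which there are #|Q| - #|A :&: J_i|.  This gives a recursion
       for weighted sums \sum_P F #|P| over sparse partitions.
   (2) ext_count N [:: k_l; ...; k_m] counts the ways to add the groups
       l, ..., m to a partition with N blocks: j_l points of group l open new
       blocks, the other k_l - j_l go into distinct old blocks.  Adding the
       points of [k] in order and using (1), the sum of ext_count #|P| (later
       groups) over the sparse partitions P of the first l groups does not
       depend on l; comparing l = 0 and l = m gives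
       #|Pi| = ext_count k_1 [:: k_2; ...; k_m].
   (3) Writing the falling factorials in ext_count as quotients of
       factorials, its recursion unfolds into the sum of the A_{j_2:j_m}. *)

Section SparsePartitions.
Variables (T I : finType) (J : I -> {set T}).

Definition sparse (B : {set T}) : bool := [forall i, #|B :&: J i| <= 1].

Definition sparse_parts (A : {set T}) : {set {set {set T}}} :=
  [set P | partition P A && [forall B in P, sparse B]].

Lemma sparseS (B C : {set T}) : B \subset C -> sparse C -> sparse B.
Proof.
move=> sBC /forallP sC; apply/forallP=> i; apply: leq_trans (sC i).
exact/subset_leq_card/setSI.
Qed.

Lemma sparse1 (y : T) : sparse [set y].
Proof.
apply/forallP=> i; rewrite -(cards1 y); exact/subset_leq_card/subsetIl.
Qed.

Lemma sparse_partsP (P : {set {set T}}) (A : {set T}) :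
  reflect (partition P A /\ {in P, forall B, sparse B}) (P \in sparse_parts A).
Proof.
rewrite inE; apply: (iffP andP) => [[pP /forall_inP sP]|[pP sP]]; split=> //.
exact/forall_inP.
Qed.

Lemma sparse_parts_set0 : sparse_parts set0 = [set set0].
Proof.
apply/setP=> P; rewrite !inE partition_set0.
apply/andP/eqP => [[/eqP]|->] //; split => //.
by apply/forall_inP => B; rewrite inE.
Qed.

Lemma setD1_neq0 (C : {set T}) (x : T) :
  x \in C -> C != [set x] -> C :\ x != set0.
Proof. by move=> xC; apply: contra_neq => e; rewrite -(setD1K xC) e setU0. Qed.

Section AddPoint.
Variables (x : T) (A : {set T}).
Hypothesis xA : x \notin A.

Definition add_singleton (Q : {set {set T}}) : {set {set T}} := [set x] |: Q.

Definition insert_point (Q : {set {set T}}) (B : {set T}) : {set {set T}} :=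
  (x |: B) |: (Q :\ B).

(* Inverse of both constructions: delete x from its block. *)
Definition remove_point (P : {set {set T}}) : {set {set T}} :=
  if pblock P x == [set x] then P :\ pblock P x
  else (pblock P x :\ x) |: (P :\ pblock P x).

Lemma notin_block (Q : {set {set T}}) (B : {set T}) :
  Q \in sparse_parts A -> B \in Q -> x \notin B.
Proof.
case/sparse_partsP=> pQ _ BQ; apply: contra xA => xB.
by rewrite -(cover_partition pQ); apply/bigcupP; exists B.
Qed.

(* Blocks are nonempty, so inserting x never produces the block {x}. *)
Lemma insert_neq_singleton (Q : {set {set T}}) (B : {set T}) :
  Q \in sparse_parts A -> B \in Q -> (x |: B == [set x]) = false.
Proof.
move=> QP BQ; apply/negbTE; apply: contraNneq (notin_block QP BQ) => e.
have /set0Pn[b bB] : B != set0.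
  by case/sparse_partsP: QP => pQ _; exact: partition_neq0 pQ BQ.
by have := setU1r x bB; rewrite e inE => /eqP <-.
Qed.

Lemma add_singletonP (Q : {set {set T}}) :
  Q \in sparse_parts A -> add_singleton Q \in sparse_parts (x |: A).
Proof.
case/sparse_partsP=> pQ sQ; apply/sparse_partsP; split.
  apply: partitionU1 => //; first by apply/set0Pn; exists x; rewrite set11.
  by rewrite disjoints1.
by move=> B /setU1P[->|/sQ //]; apply: sparse1.
Qed.

Lemma insert_pointP (Q : {set {set T}}) (B : {set T}) :
  Q \in sparse_parts A -> B \in Q -> sparse (x |: B) ->
  insert_point Q B \in sparse_parts (x |: A).
Proof.
case/sparse_partsP=> pQ sQ BQ sxB; apply/sparse_partsP; split; last first.
  by move=> C /setU1P[->//|/setD1P[_ /sQ]].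
have sBA := partitionS pQ BQ.
have -> : x |: A = (x |: B) :|: (A :\: B).
  apply/setP=> y; rewrite !inE; case: (y == x) => //=.
  by case yB: (y \in B) => //=; rewrite (subsetP sBA _ yB).
apply: partitionU1; first exact: partitionD1.
  by apply/set0Pn; exists x; rewrite setU11.
rewrite -setI_eq0; apply/eqP/setP=> y; rewrite !inE.
case: eqP => [->|_] /=; first by rewrite (negbTE xA) andbF.
by case: (y \in B).
Qed.

Lemma pblock_add_singleton (Q : {set {set T}}) :
  Q \in sparse_parts A -> pblock (add_singleton Q) x = [set x].
Proof.
move=> /add_singletonP/sparse_partsP[pP _].
by apply: def_pblock; rewrite ?(partition_trivIset pP) ?setU11 ?set11.
Qed.

Lemma pblock_insert_point (Q : {set {set T}}) (B : {set T}) :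
  Q \in sparse_parts A -> B \in Q -> sparse (x |: B) ->
  pblock (insert_point Q B) x = x |: B.
Proof.
move=> QP BQ sxB; have /sparse_partsP[pP _] := insert_pointP QP BQ sxB.
by apply: def_pblock; rewrite ?(partition_trivIset pP) ?setU11.
Qed.

Lemma remove_add_singleton (Q : {set {set T}}) :
  Q \in sparse_parts A -> remove_point (add_singleton Q) = Q.
Proof.
move=> QP; rewrite /remove_point pblock_add_singleton // eqxx.
rewrite /add_singleton setU1K //.
by apply/negP=> /(notin_block QP); rewrite set11.
Qed.

Lemma remove_insert_point (Q : {set {set T}}) (B : {set T}) :
  Q \in sparse_parts A -> B \in Q -> sparse (x |: B) ->
  remove_point (insert_point Q B) = Q.
Proof.
move=> QP BQ sxB.
rewrite /remove_point pblock_insert_point // (insert_neq_singleton QP BQ).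
rewrite setU1K ?(notin_block QP BQ) // /insert_point setU1K ?setD1K //.
by apply/negP=> /setD1P[_ /(notin_block QP)]; rewrite setU11.
Qed.

Lemma pblock_point (P : {set {set T}}) :
  partition P (x |: A) -> pblock P x \in P /\ x \in pblock P x.
Proof.
move=> pP; have xc : x \in cover P by rewrite (cover_partition pP) setU11.
by rewrite pblock_mem // mem_pblock.
Qed.

Lemma remove_pointP (P : {set {set T}}) :
  P \in sparse_parts (x |: A) -> remove_point P \in sparse_parts A.
Proof.
case/sparse_partsP=> pP sP; have [CP xC] := pblock_point pP.
set C := pblock P x in CP xC *; have pD := partitionD1 pP CP.
rewrite /remove_point -/C; case: eqP => [eC|/eqP neC]; apply/sparse_partsP.
  split; last by move=> B /setD1P[_ /sP].
  by move: pD; rewrite eC setU1K.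
split; last first.
  move=> B /setU1P[->|/setD1P[_ /sP]] //.
  exact: sparseS (subsetDl C [set x]) (sP _ CP).
have sCA := partitionS pP CP.
have -> : A = (C :\ x) :|: ((x |: A) :\: C).
  apply/setP=> y; rewrite !inE; case: eqP => [->|ny] /=.
    by rewrite xC (negbTE xA).
  case yC: (y \in C) => //=.
  by have := subsetP sCA _ yC; rewrite !inE; case: eqP.
apply: partitionU1 => //; first exact: setD1_neq0.
rewrite -setI_eq0; apply/eqP/setP=> y; rewrite !inE.
by case: (y \in C); rewrite ?andbF.
Qed.

Lemma remove_point_fibre (Q : {set {set T}}) :
  Q \in sparse_parts A ->
  [set P in sparse_parts (x |: A) | remove_point P == Q] =
  add_singleton Q |: [set insert_point Q B | B in [set B in Q | sparse (x |: B)]].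
Proof.
move=> QP; apply/setP=> P; apply/setIdP/idP; last first.
  case/setU1P => [->|/imsetP[B]].
    by split; [exact: add_singletonP | rewrite remove_add_singleton].
  rewrite inE => /andP[BQ sxB] ->.
  by split; [exact: insert_pointP | rewrite remove_insert_point].
case=> /[dup] /sparse_partsP[pP sP] PP /eqP.
have [CP xC] := pblock_point pP; rewrite /remove_point.
set C := pblock P x in CP xC *; case: eqP => [eC|/eqP neC] <-.
  by apply/setU1P; left; rewrite /add_singleton -eC setD1K.
apply/setU1P; right; apply/imsetP; exists (C :\ x).
  by rewrite inE setU11 /= setD1K //; exact: sP.
rewrite /insert_point setD1K // setU1K ?setD1K //.
apply/negP=> /setD1P[nBC BP].
have /set0Pn[y yB] := setD1_neq0 xC neC.
have := disjointFr (trivIsetP (partition_trivIset pP) _ _ BP CP nBC) yB.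
by move: yB; rewrite !inE => /andP[_ ->].
Qed.

Lemma sum_sparse_parts_add (F : nat -> nat) :
  \sum_(P in sparse_parts (x |: A)) F #|P| =
  \sum_(Q in sparse_parts A)
     (F #|Q|.+1 + #|[set B in Q | sparse (x |: B)]| * F #|Q|).
Proof.
rewrite (partition_big remove_point (fun Q => Q \in sparse_parts A));
  last by move=> P; apply: remove_pointP.
apply: eq_bigr => Q QP.
rewrite (eq_bigl (fun P =>
    P \in [set P in sparse_parts (x |: A) | remove_point P == Q]));
  last by move=> P; rewrite inE.
rewrite remove_point_fibre // big_setU1 /=; last first.
  apply/imsetP=> -[B]; rewrite inE => /andP[BQ sxB] e.
  have := pblock_insert_point QP BQ sxB; rewrite -e pblock_add_singleton //.
  by move/eqP; rewrite eq_sym (insert_neq_singleton QP BQ).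
rewrite big_imset /=; last first.
  move=> B1 B2; rewrite !inE => /andP[B1Q s1] /andP[B2Q s2] e.
  have := pblock_insert_point QP B1Q s1; rewrite e pblock_insert_point // => e2.
  by rewrite -(setU1K (notin_block QP B1Q)) -e2 setU1K // (notin_block QP B2Q).
congr (_ + _).
  have nx : [set x] \notin Q by apply/negP=> /(notin_block QP); rewrite set11.
  by rewrite /add_singleton cardsU1 nx.
rewrite -sum_nat_const; apply: eq_bigr => B; rewrite inE => /andP[BQ _].
have nx : x |: B \notin Q :\ B.
  by apply/negP=> /setD1P[_ /(notin_block QP)]; rewrite setU11.
by rewrite /insert_point cardsU1 (cardsD1 B Q) BQ nx.
Qed.

(* When x lies in exactly one group J i0, x can be inserted exactly into the
   blocks avoiding J i0, and there are #|Q| - #|A :&: J i0| of them since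
   every other block meets A :&: J i0 in a single point. *)
Variable i0 : I.
Hypothesis xJ : x \in J i0.
Hypothesis xJ' : forall i, x \in J i -> i = i0.

Lemma sparse_insert (Q : {set {set T}}) (B : {set T}) :
  Q \in sparse_parts A -> B \in Q -> sparse (x |: B) = (B :&: J i0 == set0).
Proof.
move=> QP BQ; have /sparse_partsP[_ sQ] := QP; have xB := notin_block QP BQ.
apply/idP/idP.
- move=> /forallP/(_ i0) sx; apply/eqP/setP=> y; rewrite !inE.
  apply/negP=> /andP[yB yJ].
  have sub : [set x; y] \subset (x |: B) :&: J i0.
    apply/subsetP=> z; rewrite !inE => /orP[]/eqP->;
      by rewrite ?eqxx ?xJ ?yB ?yJ ?orbT.
  have := leq_trans (subset_leq_card sub) sx; rewrite cards2.
  by case: eqP => // e; move: xB; rewrite e yB.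
- move=> /eqP e; apply/forallP=> i; rewrite setIUl.
  case: (eqVneq i i0) => [->|ni].
    by rewrite e setU0 (leq_trans (subset_leq_card (subsetIl _ _))) ?cards1.
  have -> : [set x] :&: J i = set0.
    apply/setP=> y; rewrite !inE; apply/negP=> /andP[/eqP-> /xJ' ei].
    by rewrite ei eqxx in ni.
  by rewrite set0U; move/forallP: (sQ _ BQ).
Qed.

Lemma card_insertable (Q : {set {set T}}) :
  Q \in sparse_parts A ->
  #|[set B in Q | sparse (x |: B)]| = #|Q| - #|A :&: J i0|.
Proof.
move=> QP; have /sparse_partsP[pQ sQ] := QP.
have tQ := partition_trivIset pQ; have cQ := cover_partition pQ.
set meet := [set B in Q | B :&: J i0 != set0].
have -> : [set B in Q | sparse (x |: B)] = Q :\: meet.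
  apply/setP=> B; rewrite /meet !inE; case BQ: (B \in Q) => //=.
  by rewrite (sparse_insert QP BQ) negbK andbT.
have meetE : meet = pblock Q @: (A :&: J i0).
  apply/setP=> B; rewrite /meet inE; apply/andP/imsetP.
  - case=> BQ /set0Pn[y]; rewrite inE => /andP[yB yJ].
    exists y; first by rewrite inE yJ andbT -cQ; apply/bigcupP; exists B.
    by rewrite (def_pblock tQ BQ yB).
  - case=> y; rewrite inE => /andP[yA yJ] ->.
    have yc : y \in cover Q by rewrite cQ.
    split; first exact: pblock_mem.
    by apply/set0Pn; exists y; rewrite inE mem_pblock yc.
have pblock_inj : {in A :&: J i0 &, injective (pblock Q)}.
  move=> y z; rewrite !inE => /andP[yA yJ] /andP[zA zJ] e.
  have [yc zc] : y \in cover Q /\ z \in cover Q by rewrite cQ.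
  have yin : y \in pblock Q y :&: J i0 by rewrite inE mem_pblock yc yJ.
  have zin : z \in pblock Q y :&: J i0 by rewrite inE e mem_pblock zc zJ.
  have /card_le1_eqP le1 := forallP (sQ _ (pblock_mem yc)) i0.
  by have := le1 _ _ yin zin.
have sMQ : meet \subset Q by apply/subsetP=> B; rewrite /meet inE => /andP[].
by rewrite cardsD (setIidPr sMQ) meetE card_in_imset.
Qed.

Lemma sum_sparse_parts_add_group (F : nat -> nat) :
  \sum_(P in sparse_parts (x |: A)) F #|P| =
  \sum_(Q in sparse_parts A) (F #|Q|.+1 + (#|Q| - #|A :&: J i0|) * F #|Q|).
Proof.
rewrite sum_sparse_parts_add; apply: eq_bigr => Q QP.
by rewrite card_insertable.
Qed.

End AddPoint.
End SparsePartitions.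

(* Placing r points of a fresh group into a partition with M blocks, a of
   which may receive them: j of the points open new singleton blocks and the
   other r - j go injectively into the a admissible blocks; H weighs the
   resulting number of blocks M + j. *)
Definition place_group (H : nat -> nat) (r a M : nat) : nat :=
  \sum_(j < r.+1) 'C(r, j) * a ^_ (r - j) * H (M + j).

(* Placing the first point separately: it opens a new block, or it goes into
   one of the a admissible blocks, which then ceases to be admissible. *)
Lemma place_groupS (H : nat -> nat) (r a M : nat) :
  place_group H r.+1 a M = place_group H r a M.+1 + a * place_group H r a.-1 M.
Proof.
rewrite /place_group big_ord_recl /=.
under eq_bigr => j _ do rewrite /bump /= binS !mulnDl subSS.
rewrite big_split /= [X in _ + X]addnC addnCA; congr (_ + _).
  by apply: eq_bigr => j _; rewrite add1n addSnnS.
rewrite big_distrr /=.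
transitivity (\sum_(j < r.+2) 'C(r, j) * a ^_ (r.+1 - j) * H (M + j)).
  by rewrite [in RHS]big_ord_recl /= !bin0.
rewrite big_ord_recr /= bin_small // !mul0n addn0.
apply: eq_bigr => j _; rewrite subSn ?ffactnS; last by rewrite -ltnS.
by rewrite mulnCA !mulnA.
Qed.

Lemma place_group0 (H : nat -> nat) (a M : nat) : place_group H 0 a M = H M.
Proof. by rewrite /place_group big_ord1 /= addn0 mul1n. Qed.

Lemma place_group_empty (H : nat -> nat) (r : nat) : place_group H r 0 0 = H r.
Proof.
rewrite /place_group big_ord_recr /= big1 ?subnn ?binn ?ffactn0 ?mul1n //.
by move=> j _; rewrite ffact0n subn_eq0 leqNgt ltn_ord muln0 mul0n.
Qed.

(* ext_count N ks: the number of ways to extend a partition with N blocks by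
   successive groups of sizes ks, each new block meeting each group at most
   once; all N blocks are admissible for every new group. *)
Fixpoint ext_count (N : nat) (ks : seq nat) : nat :=
  if ks is r :: ks' then place_group (ext_count^~ ks') r N N else 1.

(* The groups J_1, ..., J_m of [k] = 'I_K are consecutive intervals; the
   partitions in Pi are built point by point in increasing order. *)
Section Groups.
Variables (n : nat) (k : 'I_n.+1 -> nat).
Local Notation K := (ktot k).

Definition gsize (l : nat) : nat := if (l < n.+1)%N then k (inord l) else 0.
Definition gstart (l : nat) : nat := \sum_(0 <= i < l) gsize i.

Lemma gsizeE (i : 'I_n.+1) : gsize i = k i.
Proof. by rewrite /gsize ltn_ord inord_val. Qed.

Lemma gstartS (l : nat) : gstart l.+1 = gstart l + gsize l.
Proof. by rewrite /gstart big_nat_recr. Qed.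

Lemma gstart_mono (l l' : nat) : l <= l' -> gstart l <= gstart l'.
Proof. by move=> h; rewrite /gstart (big_cat_nat (leq0n l) h) leq_addr. Qed.

Lemma gstart_top : gstart n.+1 = K.
Proof.
by rewrite /gstart /ktot big_mkord; apply: eq_bigr => i _; apply: gsizeE.
Qed.

Lemma gstart_le (l : nat) : l <= n.+1 -> gstart l <= K.
Proof. by move=> hl; rewrite -gstart_top gstart_mono. Qed.

Lemma in_Jblock (i : 'I_n.+1) (y : 'I_K) :
  (y \in Jblock k i) = (gstart i <= y < gstart i.+1).
Proof.
have sum_gstart l : l <= n.+1 -> \sum_(i' < n.+1 | i' < l) k i' = gstart l.
  move=> hl; rewrite /gstart (big_nat_widen _ _ _ _ _ hl) big_mkord.
  by apply: eq_bigr => j _; rewrite gsizeE.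
rewrite inE sum_gstart ?(ltnW (ltn_ord i)) //.
by rewrite (eq_bigl (fun i' : 'I_n.+1 => i' < i.+1)) ?sum_gstart.
Qed.

Definition initial (t : nat) : {set 'I_K} := [set y : 'I_K | y < t].

Lemma initialS (t : nat) (ht : t < K) : initial t.+1 = Ordinal ht |: initial t.
Proof. by apply/setP=> y; rewrite !inE ltnS leq_eqVlt -val_eqE. Qed.

Lemma card_initial (t : nat) : t <= K -> #|initial t| = t.
Proof.
elim: t => [|t IH] ht.
  by apply/eqP; rewrite cards_eq0; apply/eqP/setP=> y; rewrite !inE.
by rewrite (initialS ht) cardsU1 IH ?(ltnW ht) // inE ltnn.
Qed.

Lemma initial_top : initial K = [set: 'I_K].
Proof. by apply/setP=> y; rewrite !inE ltn_ord. Qed.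

Lemma point_group (l t : nat) (ht : t < K) :
  l <= n -> gstart l <= t < gstart l.+1 ->
  Ordinal ht \in Jblock k (inord l) /\
  (forall i, Ordinal ht \in Jblock k i -> i = inord l).
Proof.
move=> hl ht'; split; first by rewrite in_Jblock inordK.
move=> i; rewrite in_Jblock /= => hi; apply: val_inj; rewrite /= inordK //.
by case: (ltngtP i l) => // /gstart_mono; lia.
Qed.

Lemma card_initial_Jblock (l t : nat) :
  l <= n -> gstart l <= t <= gstart l.+1 ->
  #|initial t :&: Jblock k (inord l)| = t - gstart l.
Proof.
move=> hl ht; have tK : t <= K.
  by apply: leq_trans (gstart_le (l := l.+1) hl); case/andP: ht.
have -> : initial t :&: Jblock k (inord l) = initial t :\: initial (gstart l).
  by apply/setP=> y; rewrite in_setI in_Jblock in_setD !inE inordK //; lia.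
have sub : initial (gstart l) \subset initial t.
  by apply/subsetP=> y; rewrite !inE; lia.
by rewrite cardsD (setIidPr sub) !card_initial //; lia.
Qed.

Definition groups_from (l : nat) : seq nat :=
  [seq gsize i | i <- iota l (n.+1 - l)].

Lemma groups_fromS (l : nat) :
  l <= n -> groups_from l = gsize l :: groups_from l.+1.
Proof. by move=> hl; rewrite /groups_from subSn. Qed.

(* Invariant while the s-th point of group l is added: s of the #|P| blocks
   already meet group l, and the remaining gsize l - s points still have to
   be placed by place_group before the later groups are counted. *)
Lemma place_points (l : nat) (s : nat) : l <= n -> s <= gsize l ->
  \sum_(P in sparse_parts (Jblock k) (initial (gstart l + s)))
     place_group (ext_count^~ (groups_from l.+1)) (gsize l - s) (#|P| - s) #|P|
  = \sum_(P in sparse_parts (Jblock k) (initial (gstart l)))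
     place_group (ext_count^~ (groups_from l.+1)) (gsize l) #|P| #|P|.
Proof.
move=> hl; elim: s => [|s IH] hs.
  by rewrite addn0 subn0; apply: eq_bigr => P _; rewrite subn0.
have ht : gstart l + s < K.
  by have := gstart_le (l := l.+1) hl; rewrite gstartS; lia.
have in_range : gstart l <= gstart l + s < gstart l.+1 by rewrite gstartS; lia.
have [xJ xJ'] := point_group ht hl in_range.
have xA : Ordinal ht \notin initial (gstart l + s) by rewrite inE ltnn.
rewrite addnS (initialS ht) (sum_sparse_parts_add_group xA xJ xJ'
  (fun M => place_group (ext_count^~ (groups_from l.+1))
                         (gsize l - s.+1) (M - s.+1) M)).
rewrite -IH ?(ltnW hs) //.
apply: eq_bigr => Q _; rewrite card_initial_Jblock ?addKn //; last first.
  by case/andP: in_range => -> /ltnW.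
by rewrite -(subnSK hs) place_groupS subSS (subnS #|Q|).
Qed.

(* Invariant over whole groups: the partitions of the first l groups,
   weighted by the number of ways to complete them, always total the same. *)
Lemma place_groups (l : nat) : l <= n.+1 ->
  \sum_(P in sparse_parts (Jblock k) (initial (gstart l)))
     ext_count #|P| (groups_from l)
  = ext_count 0 (groups_from 0).
Proof.
elim: l => [|l IH] hl.
  have -> : initial (gstart 0) = set0.
    by apply/setP=> y; rewrite !inE /gstart big_geq.
  by rewrite sparse_parts_set0 big_set1 cards0.
have hl' : l <= n by rewrite -ltnS.
rewrite -(IH (ltnW hl)) (groups_fromS hl').
rewrite -[in RHS](place_points hl' (leqnn _)) subnn -gstartS.
by apply: eq_bigr => P _; rewrite place_group0.
Qed.

(* l = 0 versus l = m in place_groups: the combinatorial half of the theorem. *)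
Lemma card_Pi_set :
  #|Pi_set k| = ext_count (k ord0) [seq k (lift ord0 i) | i <- enum 'I_n].
Proof.
have -> : Pi_set k = sparse_parts (Jblock k) [set: 'I_K] by [].
have := place_groups (leqnn n.+1).
rewrite gstart_top initial_top /groups_from subnn /= sum1_card => ->.
rewrite place_group_empty (gsizeE ord0); congr (ext_count _ _).
have -> : iota 1 n = map (addn 1) (iota 0 n) by rewrite -iotaDl.
by rewrite -val_enum_ord -!map_comp; apply: eq_map => i /=; rewrite -gsizeE.
Qed.
End Groups.

Lemma sum_recl (n : nat) (P : pred nat) (j : 'I_n.+1 -> nat) :
  \sum_(i < n.+1 | P i) j i =
  (if P 0 then j ord0 else 0) + \sum_(i < n | P i.+1) j (lift ord0 i).
Proof. by rewrite big_mkcond big_ord_recl /= [in RHS]big_mkcond. Qed.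

Definition cons_ffun (B : finType) (n : nat) (b : B) (g : {ffun 'I_n -> B})
  : {ffun 'I_n.+1 -> B} :=
  [ffun i => if unlift ord0 i is Some i' then g i' else b].

Lemma cons_ffun0 (B : finType) (n : nat) (b : B) (g : {ffun 'I_n -> B}) :
  cons_ffun b g ord0 = b.
Proof. by rewrite ffunE unlift_none. Qed.

Lemma cons_ffunS (B : finType) (n : nat) (b : B) (g : {ffun 'I_n -> B})
    (i : 'I_n) :
  cons_ffun b g (lift ord0 i) = g i.
Proof. by rewrite ffunE liftK. Qed.

Local Open Scope ring_scope.

Lemma sum_ffunS (R : nmodType) (B : finType) (n : nat)
    (F : {ffun 'I_n.+1 -> B} -> R) :
  \sum_(f : {ffun 'I_n.+1 -> B}) F f =
  \sum_(b : B) \sum_(g : {ffun 'I_n -> B}) F (cons_ffun b g).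
Proof.
rewrite pair_big /=.
rewrite (reindex (fun p : B * {ffun 'I_n -> B} => cons_ffun p.1 p.2)) //.
exists (fun f : {ffun 'I_n.+1 -> B} =>
          (f ord0, [ffun i : 'I_n => f (lift ord0 i)]))
  => [[b g] _|f _] /=.
  by rewrite cons_ffun0; congr (_, _); apply/ffunP=> i; rewrite ffunE cons_ffunS.
apply/ffunP=> i; rewrite ffunE; case: unliftP => [j ->|->] //.
by rewrite ffunE.
Qed.

(* The summand of the theorem with a general starting value N in place of
   k_1 and general bounds b i in place of k_2, ..., k_m:
   Aterm k j = Aprod (k ord0) (fun i => k (lift ord0 i)) j. *)
Definition Aprod (n N : nat) (b j : 'I_n -> nat) : rat :=
  \prod_(i < n)
    ((('C(b i, j i))%:R : rat)
     * ((N + \sum_(i' < n | (i' < i)%N) j i')`!)%:R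
     / ((N + \sum_(i' < n | (i' <= i)%N) j i' - b i)`!)%:R).

Lemma eq_Aprod (n N : nat) (b j1 j2 : 'I_n -> nat) :
  j1 =1 j2 -> Aprod N b j1 = Aprod N b j2.
Proof.
move=> e; apply: eq_bigr => i _.
by rewrite e (eq_bigr _ (fun i' _ => e i')) (eq_bigr _ (fun i' _ => e i')).
Qed.

(* Peeling off the first factor: the quotient of factorials it contributes
   is the falling factorial N ^_ (b_0 - j_0). *)
Lemma AprodS (n N : nat) (b j : 'I_n.+1 -> nat) :
  (j ord0 <= b ord0 <= N)%N ->
  Aprod N b j = ('C(b ord0, j ord0) * N ^_ (b ord0 - j ord0))%:R *
     Aprod (N + j ord0) (fun i => b (lift ord0 i)) (fun i => j (lift ord0 i)).
Proof.
case/andP=> jb bN; rewrite /Aprod big_ord_recl /=; congr (_ * _).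
  rewrite !(sum_recl (fun i' => (i' < 0)%N)) /=.
  rewrite !(sum_recl (fun i' => (i' <= 0)%N)) /=.
  rewrite !big_pred0 // !addn0 -subnBA //.
  have hm : (b ord0 - j ord0 <= N)%N := leq_trans (leq_subr _ _) bN.
  rewrite -(ffact_fact hm) natrM -mulrA mulfK ?natrM //.
  by rewrite pnatr_eq0 -lt0n fact_gt0.
apply: eq_bigr => i _.
by rewrite (sum_recl (fun i' => (i' < lift ord0 i)%N))
           (sum_recl (fun i' => (i' <= lift ord0 i)%N)) /= !addnA.
Qed.

(* The algebraic identity: summing Aprod over j_i <= b_i unfolds exactly the
   recursion defining ext_count. *)
Lemma sum_Aprod (n : nat) : forall (B N : nat) (b : 'I_n -> nat),
  (forall i, b i <= B)%N -> (forall i, b i <= N)%N ->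
  \sum_(j : {ffun 'I_n -> 'I_B.+1} | [forall i, (j i <= b i)%N])
     Aprod N b (fun i => nat_of_ord (j i))
  = (ext_count N [seq b i | i <- enum 'I_n])%:R.
Proof.
elim: n => [|n IH] B N b hB hN.
  rewrite enum_ord0 (eq_bigl xpredT); last by move=> j; apply/forallP=> -[].
  rewrite (eq_bigr (fun _ => 1)); last by move=> j _; rewrite /Aprod big_ord0.
  by rewrite sumr_const card_ffun !card_ord expn0.
rewrite big_mkcond sum_ffunS enum_ordSl /= -map_comp natr_sum.
rewrite (big_ord_widen B.+1 (fun j => (('C(b ord0, j) * N ^_ (b ord0 - j)
   * ext_count (N + j) [seq (b \o lift ord0) i | i <- enum 'I_n])%N)%:R));
  last by rewrite ltnS.
rewrite [in RHS]big_mkcond /=; apply: eq_bigr => a _.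
have consP (g : {ffun 'I_n -> 'I_B.+1}) :
    [forall i, (cons_ffun a g i <= b i)%N] =
    (a <= b ord0)%N && [forall i, (g i <= b (lift ord0 i))%N].
  apply/forallP/andP => [le_ab|[le_a /forallP le_g] i].
    split; first by have := le_ab ord0; rewrite cons_ffun0.
    by apply/forallP=> i; have := le_ab (lift ord0 i); rewrite cons_ffunS.
  by case: (unliftP ord0 i) => [j ->|->]; rewrite ?cons_ffunS ?cons_ffun0.
rewrite ltnS; case: leqP => hab; last first.
  by apply: big1 => g _; rewrite consP leqNgt hab.
under eq_bigr => g _ do rewrite consP hab /=.
rewrite -big_mkcond /=.
under eq_bigr => g _ do rewrite AprodS ?cons_ffun0 ?hab ?hN //=.
rewrite -mulr_sumr [RHS]natrM; congr (_ * _).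
rewrite -(IH B (N + a)%N (fun i => b (lift ord0 i)) (fun i => hB _)
  (fun i => leq_trans (hN _) (leq_addr _ _))).
by apply: eq_bigr => g _; apply: eq_Aprod => i; rewrite cons_ffunS.
Qed.

(* The theorem: by monotonicity every bound k_l is at most k_1, so the
   summation range 'I_(k_1).+1 is large enough for sum_Aprod; the identity
   holds without the positivity hypothesis. *)
Theorem mainTheorem7 (n : nat) (k : 'I_n.+1 -> nat)
  (hmono : forall a b : 'I_n.+1, (a <= b)%N -> (k b <= k a)%N)
  (hpos : forall a : 'I_n.+1, (1 <= k a)%N) :
  \sum_(j : {ffun 'I_n -> 'I_(k ord0).+1}
          | [forall i : 'I_n, (j i <= k (lift ord0 i))%N])
     Aterm k (fun i => nat_of_ord (j i))
  = (#|Pi_set k|)%:R.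
Proof.
have le_k0 : forall i : 'I_n, (k (lift ord0 i) <= k ord0)%N.
  by move=> i; apply: hmono.
by rewrite card_Pi_set; exact: (sum_Aprod le_k0 le_k0).
Qed.
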